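(* Let $\alpha,\beta,\gamma,\alpha',\beta',\gamma'\in\mathbb C$ with $\beta\beta'\neq0$ and $\alpha/\beta=\alpha'/\beta'+1$, and let $G(t,z)$ be the EGF of the GKP triangle $\left[\begin{array}{cc|c}\alpha,&\beta&\gamma\\ \alpha',&\beta'&\gamma'\end{array}\right]$. Put $\rho=\beta/(\beta+\beta't)$. If $\alpha\neq0$ then near $(0,0)$ $$G(t,z)=\Bigl\{1-\rho\bigl[1-(1-\alpha z/\rho)^{\beta/\alpha}\bigr]\Bigr\}^{-\gamma/\beta}\Bigl\{1-\tfrac{\beta't}{\beta+\beta't}\bigl[1-(1-\alpha z/\rho)^{-\beta/\alpha}\bigr]\Bigr\}^{\gamma'/\beta'},$$ and if $\alpha=0$ (i.e. $\alpha'=-\beta'$) then $$G(t,z)=\Bigl\{1-\rho\bigl[1-e^{-z(\beta+\beta't)}\bigr]\Bigr\}^{-\gamma/\beta}\Bigl\{1-\tfrac{\beta't}{\beta+\beta't}\bigl[1-e^{z(\beta+\beta't)}\bigr]\Bigr\}^{\gamma'/\beta'},$$ all powers being principal branches equal to $1$ at $z=0$.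
   Context: GKP triangle: for complex parameters $\alpha,\beta,\gamma,\alpha',\beta',\gamma'$, the array $T_{n,k}=\left[\begin{array}{cc|c}\alpha,&\beta&\gamma\\ \alpha',&\beta'&\gamma'\end{array}\right]_{n,k}$ is defined by $T_{0,0}=1$, $T_{n,k}=0$ if $n<0$, $k<0$ or $k>n$, and $T_{n+1,k+1}=[\alpha n+\beta(k+1)+\gamma]T_{n,k+1}+[\alpha' n+\beta' k+\gamma']T_{n,k}$ for $n\ge0$, $k\in\mathbb Z$; its EGF is $G(t,z)=\sum_{n\ge0}\sum_{k=0}^nT_{n,k}t^kz^n/n!$. *)

From Stdlib Require Import Reals Factorial.
From Coquelicot Require Import Coquelicot.
Open Scope C_scope.

Definition Carg (z : C) : R :=
  let x := fst z in let y := snd z in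
  if Rlt_dec 0 x then atan (y / x)
  else if Rlt_dec x 0 then
    (if Rle_dec 0 y then atan (y / x) + PI else atan (y / x) - PI)%R
  else (if Rlt_dec 0 y then PI / 2 else if Rlt_dec y 0 then - (PI / 2) else 0)%R.

Definition Cexpo (z : C) : C :=
  (exp (fst z) * cos (snd z), exp (fst z) * sin (snd z))%R.
Definition Clog (z : C) : C := (ln (Cmod z), Carg z).

(* Principal power a^b = exp(b Log a) (0^b := 0). *)
Definition Cprinpow (a b : C) : C := if Ceq_dec a 0 then 0 else Cexpo (b * Clog a).

Fixpoint Cnpow (a : C) (n : nat) : C :=
  match n with O => 1 | S m => a * Cnpow a m end.

Definition CN (n : nat) : C := RtoC (INR n).

(* GKP triangle T_{n,k}, for k >= 0; T_{n,k}=0 for k<0 is built in: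
   T_{n+1,0} = (alpha n + gamma) T_{n,0}. *)
Fixpoint GKP (a b g a' b' g' : C) (n k : nat) : C :=
  match n with
  | O => match k with O => 1 | S _ => 0 end
  | S m =>
    match k with
    | O => (a * CN m + b * CN 0 + g) * GKP a b g a' b' g' m O
    | S j => (a * CN m + b * CN (S j) + g) * GKP a b g a' b' g' m (S j)
             + (a' * CN m + b' * CN j + g') * GKP a b g a' b' g' m j
    end
  end.

Definition GKP_egf_term (a b g a' b' g' t z : C) (n : nat) : C :=
  sum_n (fun k => GKP a b g a' b' g' n k * Cnpow t k) n
  * Cnpow z n / RtoC (INR (fact n)).

From Stdlib Require Import Reals Lra Lia Psatz Factorial.
From Coquelicot Require Import Coquelicot.

(** From the recurrence, the row polynomials [P_n(t) = sum_k T(n,k) t^k] satisfy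
    [P_(n+1) = ((a + a't) n + g + g't) P_n + (b + b't) t P_n'], so the EGF solves the
    linear PDE [(1 - (a + a't) z) G_z - (b + b't) t G_t = (g + g't) G] with [G = 1] on
    [z = 0].  Along a characteristic [y |-> (t(y), z(y))] leaving [z = 0], the product
    [G E] is constant as soon as [E' = - mu (g + g't) E], where [mu] is the speed of the
    characteristic; hence [G = 1/E] at its end.  Instead of manipulating power series we
    run this argument on the partial sums of the EGF: along the characteristic they obey
    the same ODE up to a term decaying like [2^-N], and the mean value inequality gives
    the convergence of the series to [1/E].

    The hypothesis [a/b = a'/b' + 1] makes the characteristic through [(t, z)] explicit:
    parametrised by [x] on the segment [[1, X0]], it is [t(x) = (t/X0) x],
    [z(x) = W(x) / (b + b' t(x))] with [x W'(x) = a W(x)/b - 1], i.e.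
    [W(x) = (b/a) (1 - x^(a/b))], or [W(x) = - log x] when [a = 0].  Solving
    [W(X0) = z (b + b' t)] gives [X0 = (1 - a z/rho)^(b/a)], resp. [X0 = exp(-z (b + b't))],
    and [E] integrates to the product of powers in the statement. *)

Open Scope R_scope.

Lemma is_derive_eq (f : R -> R) (x l l' : R) : is_derive f x l -> l = l' -> is_derive f x l'.
Proof. now intros H <-. Qed.

(** Coquelicot's derivative rules specialised to [R -> R], so that the derivatives
    are stated with [Rplus] and [Rmult] and [ring]/[field] apply to them. *)
Section RealDerive.

Variables (f g : R -> R) (x df dg : R).
Hypotheses (Hf : is_derive f x df) (Hg : is_derive g x dg).

Lemma is_derive_Rplus : is_derive (fun y => f y + g y) x (df + dg).
Proof. exact (is_derive_plus f g x df dg Hf Hg). Qed.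

Lemma is_derive_Rminus : is_derive (fun y => f y - g y) x (df - dg).
Proof. exact (is_derive_minus f g x df dg Hf Hg). Qed.

Lemma is_derive_Ropp : is_derive (fun y => - f y) x (- df).
Proof. exact (is_derive_opp f x df Hf). Qed.

Lemma is_derive_Rmult : is_derive (fun y => f y * g y) x (df * g x + f x * dg).
Proof. apply (is_derive_mult f g x df dg Hf Hg); intros; apply Rmult_comm. Qed.

Lemma is_derive_Rcomp (h : R -> R) (dh : R) :
  is_derive h (f x) dh -> is_derive (fun y => h (f y)) x (df * dh).
Proof. intros Hh. exact (is_derive_comp h f x dh df Hh Hf). Qed.

End RealDerive.

Lemma is_derive_sum_sq (f g : R -> R) (x df dg : R) :
  is_derive f x df -> is_derive g x dg ->
  is_derive (fun y => f y ^ 2 + g y ^ 2) x (2 * f x * df + 2 * g x * dg).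
Proof.
  intros Hf Hg.
  eapply is_derive_eq; [apply is_derive_Rplus; apply is_derive_pow; eassumption|].
  simpl; ring.
Qed.

Lemma MVT_abs_le (f df : R -> R) (M : R) :
  (forall x, 0 <= x <= 1 -> is_derive f x (df x)) ->
  (forall x, 0 <= x <= 1 -> Rabs (df x) <= M) ->
  Rabs (f 1 - f 0) <= M.
Proof.
  intros Hd HM.
  destruct (MVT_gen f 0 1 df) as [c [Hc ->]];
    rewrite ?Rmin_left, ?Rmax_right in * by lra.
  - intros x Hx; apply Hd; lra.
  - intros x Hx. apply continuity_pt_filterlim, (ex_derive_continuous (V := R_NormedModule)).
    exists (df x); apply Hd; lra.
  - rewrite Rminus_0_r, Rmult_1_r. apply HM; lra.
Qed.

Open Scope C_scope.

Lemma Cexpo_add (u v : C) : Cexpo (u + v) = Cexpo u * Cexpo v.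
Proof.
  destruct u as [p q], v as [p' q']; unfold Cexpo; simpl.
  rewrite exp_plus, cos_plus, sin_plus.
  apply injective_projections; simpl; ring.
Qed.

Lemma Cexpo_0 : Cexpo 0 = 1.
Proof.
  unfold Cexpo; simpl. rewrite exp_0, cos_0, sin_0.
  apply injective_projections; simpl; ring.
Qed.

Lemma Cmod_Cexpo (w : C) : Cmod (Cexpo w) = exp (fst w).
Proof.
  unfold Cmod, Cexpo; simpl.
  replace (_ * (_ * 1) + _ * (_ * 1))%R
    with (exp (fst w) * exp (fst w) * (Rsqr (sin (snd w)) + Rsqr (cos (snd w))))%R
    by (unfold Rsqr; ring).
  rewrite sin2_cos2, Rmult_1_r. apply sqrt_square. pose proof (exp_pos (fst w)); lra.
Qed.

Lemma Cexpo_neq0 (w : C) : Cexpo w <> 0.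
Proof.
  intros E. pose proof (Cmod_Cexpo w) as H. rewrite E, Cmod_0 in H.
  pose proof (exp_pos (fst w)); lra.
Qed.

Lemma Cexpo_opp (w : C) : Cexpo (- w) = / Cexpo w.
Proof.
  assert (H : Cexpo w * Cexpo (- w) = 1).
  { rewrite <- Cexpo_add, Cplus_opp_r. apply Cexpo_0. }
  pose proof (Cexpo_neq0 w).
  rewrite <- (Cmult_1_r (/ Cexpo w)), <- H. field. assumption.
Qed.

Lemma exp_le_exp (u v : R) : (u <= v -> exp u <= exp v)%R.
Proof. intros [H | ->]; [left; apply exp_increasing, H | lra]. Qed.

Lemma Cmod_Cexpo_le (w : C) : (Cmod (Cexpo w) <= exp (Cmod w))%R.
Proof.
  rewrite Cmod_Cexpo. apply exp_le_exp, (Rle_trans _ _ _ (Rle_abs _)), re_le_Cmod.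
Qed.

(** On [Re w > 0] the principal logarithm needs no case split on the argument; this
    branch-free form is the one that is differentiated below. *)
Definition Clog_rhp (w : C) : C := (ln (Cmod w), atan (snd w / fst w)%R).

Lemma Clog_rhp_eq (w : C) : (0 < fst w)%R -> Clog w = Clog_rhp w.
Proof.
  intros Hp. unfold Clog, Clog_rhp, Carg. destruct (Rlt_dec 0 (fst w)); [reflexivity | lra].
Qed.

Lemma Cexpo_Clog_rhp (w : C) : (0 < fst w)%R -> Cexpo (Clog_rhp w) = w.
Proof.
  intros Hp. destruct w as [p q]; simpl in Hp. unfold Cexpo, Clog_rhp; simpl.
  assert (Hm : (0 < Cmod (p, q))%R) by (apply Cmod_gt_0; intros E; inversion E; lra).
  rewrite exp_ln by exact Hm. rewrite cos_atan, sin_atan.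
  assert (Hs : sqrt (1 + (q / p)²) = (Cmod (p, q) / p)%R).
  { apply Rsqr_inj; [apply sqrt_pos | left; apply Rdiv_lt_0_compat; auto |].
    rewrite Rsqr_sqrt, !Rsqr_div' by (pose proof (Rle_0_sqr (q / p)); lra).
    unfold Cmod. rewrite Rsqr_sqrt by (simpl; nra). simpl; unfold Rsqr; field; lra. }
  rewrite Hs. apply injective_projections; simpl; field; lra.
Qed.

Lemma Clog_rhp_Cexpo (w : C) : (Rabs (snd w) < PI / 2)%R -> Clog_rhp (Cexpo w) = w.
Proof.
  intros Hb. destruct w as [p q]; simpl in Hb. apply Rabs_def2 in Hb.
  unfold Clog_rhp. rewrite Cmod_Cexpo, ln_exp. unfold Cexpo; simpl.
  assert (Hc : (0 < cos q)%R) by (apply cos_gt_0; lra).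
  replace (exp p * sin q / (exp p * cos q))%R with (tan q)
    by (unfold tan; field; split; [lra | pose proof (exp_pos p); lra]).
  rewrite atan_tan by lra. reflexivity.
Qed.

Lemma Clog_rhp_1 : Clog_rhp 1 = 0.
Proof.
  unfold Clog_rhp. rewrite Cmod_1, ln_1. simpl.
  rewrite Rdiv_0_l, atan_0. reflexivity.
Qed.

Lemma Cprinpow_rhp (u v : C) : (0 < fst u)%R -> Cprinpow u v = Cexpo (v * Clog_rhp u).
Proof.
  intros Hp. unfold Cprinpow. destruct (Ceq_dec u 0) as [->|_].
  - simpl in Hp; lra.
  - now rewrite Clog_rhp_eq.
Qed.

(** Stated with the operations of [C] rather than those of the abstract ring behind
    [sum_n], so that [ring] and [field] see through these sums. *)
Fixpoint Csum (f : nat -> C) (n : nat) : C :=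
  match n with O => f O | S m => Csum f m + f (S m) end.

Lemma sum_n_Csum (f : nat -> C) (n : nat) : sum_n f n = Csum f n.
Proof. induction n as [|n IH]; [now rewrite sum_O | now rewrite sum_Sn, IH]. Qed.

Lemma Csum_ext (f g : nat -> C) (n : nat) :
  (forall k, (k <= n)%nat -> f k = g k) -> Csum f n = Csum g n.
Proof.
  induction n as [|n IH]; intros H; simpl; [apply H; lia|].
  rewrite IH by (intros; apply H; lia). now rewrite H.
Qed.

Lemma Csum_plus (f g : nat -> C) (n : nat) :
  Csum (fun k => f k + g k) n = Csum f n + Csum g n.
Proof. induction n as [|n IH]; simpl; [|rewrite IH]; ring. Qed.

Lemma Csum_scal (c : C) (f : nat -> C) (n : nat) :
  Csum (fun k => c * f k) n = c * Csum f n.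
Proof. induction n as [|n IH]; simpl; [|rewrite IH]; ring. Qed.

Lemma Csum_Sn_l (f : nat -> C) (n : nat) : Csum f (S n) = f O + Csum (fun k => f (S k)) n.
Proof. induction n as [|n IH]; simpl in *; [|rewrite IH]; ring. Qed.

Lemma Csum_null (f : nat -> C) (n : nat) : (forall k, (k <= n)%nat -> f k = 0) -> Csum f n = 0.
Proof.
  induction n as [|n IH]; intros H; simpl; [apply H; lia|].
  rewrite IH by (intros; apply H; lia). rewrite H by lia. ring.
Qed.

Lemma Cmod_Csum_le (f : nat -> C) (B : R) (n : nat) :
  (forall k, (k <= n)%nat -> Cmod (f k) <= B)%R -> (Cmod (Csum f n) <= INR (S n) * B)%R.
Proof.
  induction n as [|n IH]; intros H; simpl Csum.
  - simpl; rewrite Rmult_1_l; auto.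
  - rewrite S_INR. eapply Rle_trans; [apply Cmod_triangle|].
    pose proof (IH (fun k Hk => H k (le_S _ _ Hk))). pose proof (H (S n) (le_n _)). lra.
Qed.

Definition is_derive_RC (f : R -> C) (x : R) (l : C) : Prop :=
  is_derive (fun y => fst (f y)) x (fst l) /\ is_derive (fun y => snd (f y)) x (snd l).

Section DeriveRC.

Variable x : R.

Lemma is_derive_RC_eq (f : R -> C) (l l' : C) :
  is_derive_RC f x l -> l = l' -> is_derive_RC f x l'.
Proof. now intros H <-. Qed.

Lemma is_derive_RC_ext (f g : R -> C) (l : C) :
  (forall y, f y = g y) -> is_derive_RC f x l -> is_derive_RC g x l.
Proof.
  intros E [H1 H2]; split; eapply is_derive_ext; try eassumption; intros; simpl; now rewrite E.
Qed.

Lemma is_derive_RC_const (c : C) : is_derive_RC (fun _ => c) x 0.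
Proof. split; apply (is_derive_const (fst c)) || apply (is_derive_const (snd c)). Qed.

Lemma is_derive_RC_affine (c v : C) : is_derive_RC (fun y => c + RtoC y * v) x v.
Proof.
  assert (Haff : forall p q : R, is_derive (fun y => p + y * q)%R x q).
  { intros p q. eapply is_derive_eq.
    - apply is_derive_Rplus; [apply (is_derive_const p) | apply is_derive_Rmult;
        [apply (is_derive_id (K := R_AbsRing)) | apply (is_derive_const q)]].
    - unfold zero, one; simpl; ring. }
  destruct c as [p q], v as [p' q']; split; simpl.
  - apply (is_derive_ext (fun y => p + y * p')%R); [intros; simpl; ring | apply Haff].
  - apply (is_derive_ext (fun y => q + y * q')%R); [intros; simpl; ring | apply Haff].
Qed.

Lemma is_derive_RC_plus (f g : R -> C) (df dg : C) :
  is_derive_RC f x df -> is_derive_RC g x dg -> is_derive_RC (fun y => f y + g y) x (df + dg).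
Proof. intros [A1 A2] [B1 B2]; split; apply is_derive_Rplus; auto. Qed.

Lemma is_derive_RC_minus (f g : R -> C) (df dg : C) :
  is_derive_RC f x df -> is_derive_RC g x dg -> is_derive_RC (fun y => f y - g y) x (df - dg).
Proof.
  intros [A1 A2] [B1 B2]; split; simpl;
    (eapply is_derive_eq; [apply is_derive_Rminus; eauto | simpl; ring]).
Qed.

Lemma is_derive_RC_mult (f g : R -> C) (df dg : C) :
  is_derive_RC f x df -> is_derive_RC g x dg ->
  is_derive_RC (fun y => f y * g y) x (df * g x + f x * dg).
Proof.
  intros [A1 A2] [B1 B2]; split; simpl.
  - eapply is_derive_eq; [apply is_derive_Rminus; apply is_derive_Rmult; eauto | simpl; ring].
  - eapply is_derive_eq; [apply is_derive_Rplus; apply is_derive_Rmult; eauto | simpl; ring].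
Qed.

Lemma is_derive_RC_scal (c : C) (f : R -> C) (df : C) :
  is_derive_RC f x df -> is_derive_RC (fun y => c * f y) x (c * df).
Proof.
  intros H. eapply is_derive_RC_eq.
  - apply is_derive_RC_mult; [apply is_derive_RC_const | exact H].
  - cbv beta; ring.
Qed.

Lemma is_derive_RC_inv (f : R -> C) (df : C) :
  is_derive_RC f x df -> f x <> 0 -> is_derive_RC (fun y => / f y) x (- df / (f x * f x)).
Proof.
  intros [A1 A2] Hn.
  assert (Hp : (fst (f x) ^ 2 + snd (f x) ^ 2 <> 0)%R).
  { intros E. apply Hn. destruct (f x) as [p q]; simpl in *.
    apply injective_projections; simpl; nra. }
  pose proof (is_derive_sum_sq _ _ _ _ _ A1 A2) as Hd.
  split; cbn [Cinv fst snd].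
  - eapply is_derive_eq; [apply is_derive_div; eauto|].
    cbv beta; destruct (f x) as [p q], df as [dp dq]; simpl in *.
    assert (p * p + q * q <> 0)%R by (contradict Hp; nra).
    field; repeat split; auto; contradict Hp; nra.
  - eapply is_derive_eq; [apply is_derive_div; [apply is_derive_Ropp; eauto | exact Hd | auto]|].
    cbv beta; destruct (f x) as [p q], df as [dp dq]; simpl in *.
    assert (p * p + q * q <> 0)%R by (contradict Hp; nra).
    field; repeat split; auto; contradict Hp; nra.
Qed.

Lemma is_derive_RC_div (f g : R -> C) (df dg : C) :
  is_derive_RC f x df -> is_derive_RC g x dg -> g x <> 0 ->
  is_derive_RC (fun y => f y / g y) x ((df * g x - f x * dg) / (g x * g x)).
Proof.
  intros Hf Hg Hn. eapply is_derive_RC_eq.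
  - apply is_derive_RC_mult; [exact Hf | apply is_derive_RC_inv; eauto].
  - cbv beta; field. exact Hn.
Qed.

Lemma is_derive_RC_Cexpo (f : R -> C) (df : C) :
  is_derive_RC f x df -> is_derive_RC (fun y => Cexpo (f y)) x (df * Cexpo (f x)).
Proof.
  intros [A1 A2]; unfold Cexpo; split; simpl;
    (eapply is_derive_eq; [apply is_derive_Rmult; apply is_derive_Rcomp;
       eauto using is_derive_exp, is_derive_cos, is_derive_sin | simpl; ring]).
Qed.

Lemma is_derive_RC_Clog_rhp (f : R -> C) (df : C) :
  is_derive_RC f x df -> (0 < fst (f x))%R ->
  is_derive_RC (fun y => Clog_rhp (f y)) x (df / f x).
Proof.
  intros [A1 A2] Hp. unfold Clog_rhp, Cmod.
  pose proof (is_derive_sum_sq _ _ _ _ _ A1 A2) as Hd.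
  assert (Hs : (0 < fst (f x) ^ 2 + snd (f x) ^ 2)%R) by nra.
  split.
  - eapply is_derive_eq.
    + apply is_derive_Rcomp; [apply is_derive_sqrt; eauto|].
      apply is_derive_ln, sqrt_lt_R0, Hs.
    + cbn [fst snd Cdiv Cmult Cinv].
      destruct (f x) as [p q], df as [dp dq]; cbn [fst snd] in *.
      assert (0 < sqrt (p ^ 2 + q ^ 2))%R by (apply sqrt_lt_R0; lra).
      field_simplify; [|lra..].
      rewrite <- Rsqr_pow2, Rsqr_sqrt by lra.
      field. lra.
  - eapply is_derive_eq.
    + apply is_derive_Rcomp; [apply is_derive_div; eauto; lra | apply is_derive_atan].
    + cbn [fst snd Cdiv Cmult Cinv].
      destruct (f x) as [p q], df as [dp dq]; cbn [fst snd] in *. unfold Rsqr.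
      field. split; nra.
Qed.

Lemma is_derive_RC_Cnpow (f : R -> C) (df : C) (n : nat) :
  is_derive_RC f x df -> is_derive_RC (fun y => Cnpow (f y) n) x (CN n * Cnpow (f x) (pred n) * df).
Proof.
  intros H. induction n as [|n IH]; simpl.
  - eapply is_derive_RC_eq; [apply is_derive_RC_const|]. unfold CN; simpl. ring.
  - eapply is_derive_RC_eq; [apply is_derive_RC_mult; [exact H | exact IH]|].
    destruct n as [|n]; unfold CN; simpl pred.
    + simpl. ring.
    + rewrite (S_INR (S n)), RtoC_plus. simpl Cnpow. ring.
Qed.

Lemma is_derive_RC_Csum (f : nat -> R -> C) (df : nat -> C) (n : nat) :
  (forall k, (k <= n)%nat -> is_derive_RC (f k) x (df k)) ->
  is_derive_RC (fun y => Csum (fun k => f k y) n) x (Csum df n).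
Proof.
  induction n as [|n IH]; intros H; simpl; [apply H; lia|].
  apply is_derive_RC_plus; [apply IH; intros; apply H | apply H]; lia.
Qed.

End DeriveRC.

Lemma im_le_Cmod (w : C) : (Rabs (snd w) <= Cmod w)%R.
Proof. eapply Rle_trans; [apply Rmax_r | apply Rmax_Cmod]. Qed.

Lemma Cmod_le_Rabs_sum (w : C) : (Cmod w <= Rabs (fst w) + Rabs (snd w))%R.
Proof.
  pose proof (Rabs_pos (fst w)). pose proof (Rabs_pos (snd w)).
  unfold Cmod. apply Rsqr_incr_0_var; [|lra].
  rewrite Rsqr_sqrt by nra.
  rewrite <- (pow2_abs (fst w)), <- (pow2_abs (snd w)). unfold Rsqr. nra.
Qed.

Lemma MVT_Cmod_le (f df : R -> C) (M : R) :
  (forall x, (0 <= x <= 1)%R -> is_derive_RC f x (df x)) ->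
  (forall x, (0 <= x <= 1)%R -> Cmod (df x) <= M)%R ->
  (Cmod (f 1%R - f 0%R) <= 2 * M)%R.
Proof.
  intros Hd HM.
  assert (H1 : (Rabs (fst (f 1%R) - fst (f 0%R)) <= M)%R).
  { apply (MVT_abs_le (fun y => fst (f y)) (fun y => fst (df y))).
    - intros y Hy; apply (Hd y Hy).
    - intros y Hy. eapply Rle_trans; [apply re_le_Cmod | auto]. }
  assert (H2 : (Rabs (snd (f 1%R) - snd (f 0%R)) <= M)%R).
  { apply (MVT_abs_le (fun y => snd (f y)) (fun y => snd (df y))).
    - intros y Hy; apply (Hd y Hy).
    - intros y Hy. eapply Rle_trans; [apply im_le_Cmod | auto]. }
  eapply Rle_trans; [apply Cmod_le_Rabs_sum|]. simpl. unfold Rminus in *. lra.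
Qed.

Section NearOne.

Variables (w : C) (d : R).
Hypothesis Hw : (Cmod (w - 1) <= d)%R.

Lemma near_1_re_ge : (1 - d <= fst w)%R.
Proof.
  pose proof (re_le_Cmod (w - 1)) as H. simpl in H.
  pose proof (Rle_abs (- (fst w + - (1))))%R as H'. rewrite Rabs_Ropp in H'. lra.
Qed.

Lemma near_1_Cmod_ge : (1 - d <= Cmod w)%R.
Proof.
  pose proof (Cmod_triangle (w - 1) (- w)) as H.
  replace (w - 1 + - w) with (- (1)) in H by ring. rewrite Cmod_m1, Cmod_opp in H. lra.
Qed.

Lemma near_1_Cmod_le : (Cmod w <= 1 + d)%R.
Proof.
  pose proof (Cmod_triangle (w - 1) 1) as H.
  replace (w - 1 + 1) with w in H by ring. rewrite Cmod_1 in H. lra.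
Qed.

End NearOne.

Lemma Cmod_Clog_rhp_le (w : C) (d : R) :
  (Cmod (w - 1) <= d)%R -> (d <= 1/2)%R -> (Cmod (Clog_rhp w) <= 4 * d)%R.
Proof.
  intros Hw Hd.
  set (f := fun y : R => 1 + RtoC y * (w - 1)).
  assert (Hf : forall y, (0 <= y <= 1)%R -> (Cmod (f y - 1) <= d)%R).
  { intros y Hy. unfold f. replace (1 + y * (w - 1) - 1) with (RtoC y * (w - 1)) by ring.
    rewrite Cmod_mult, Cmod_R, Rabs_pos_eq by lra. pose proof (Cmod_ge_0 (w - 1)). nra. }
  pose proof (MVT_Cmod_le (fun y => Clog_rhp (f y)) (fun y => (w - 1) / f y) (2 * d)) as M.
  cbv beta in M.
  replace (f 1%R) with w in M by (unfold f; ring).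
  replace (f 0%R) with (RtoC 1) in M by (unfold f; ring).
  rewrite Clog_rhp_1 in M. replace (Clog_rhp w - 0) with (Clog_rhp w) in M by ring.
  replace (4 * d)%R with (2 * (2 * d))%R by ring.
  apply M.
  - intros y Hy. apply is_derive_RC_Clog_rhp; [apply is_derive_RC_affine|].
    pose proof (near_1_re_ge _ _ (Hf y Hy)). lra.
  - intros y Hy. pose proof (near_1_Cmod_ge _ _ (Hf y Hy)).
    rewrite Cmod_div by (intros E; rewrite E, Cmod_0 in *; lra).
    apply Rle_div_l; [lra|]. pose proof (Cmod_ge_0 (w - 1)). nra.
Qed.

Lemma Cmod_Cexpo_sub_1_le (w : C) : (Cmod w <= 1)%R -> (Cmod (Cexpo w - 1) <= 6 * Cmod w)%R.
Proof.
  intros Hw.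
  pose proof (MVT_Cmod_le (fun y => Cexpo (RtoC y * w)) (fun y => w * Cexpo (RtoC y * w))
                (3 * Cmod w)) as M.
  cbv beta in M.
  rewrite Cmult_1_l, Cmult_0_l, Cexpo_0 in M.
  replace (6 * Cmod w)%R with (2 * (3 * Cmod w))%R by ring.
  apply M.
  - intros y Hy. apply is_derive_RC_Cexpo.
    eapply is_derive_RC_ext; [|apply (is_derive_RC_affine y 0 w)]. intros; simpl; ring.
  - intros y Hy. rewrite Cmod_mult.
    pose proof (Cmod_Cexpo_le (RtoC y * w)) as H.
    rewrite Cmod_mult, Cmod_R, Rabs_pos_eq in H by lra.
    assert (exp (y * Cmod w) <= exp 1)%R by (apply exp_le_exp; nra).
    pose proof exp_le_3. pose proof (Cmod_ge_0 w). pose proof (Cmod_ge_0 (Cexpo (RtoC y * w))). nra.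
Qed.

(** * Row polynomials of the GKP triangle *)

Lemma RtoC_INR_fact_neq0 (n : nat) : RtoC (INR (fact n)) <> 0.
Proof. intros E. apply RtoC_inj in E. exact (INR_fact_neq_0 n E). Qed.

Section GKPRows.

Variables a b g a' b' g' : C.

Local Notation T := (GKP a b g a' b' g').

Definition GKP_row (n : nat) (t : C) : C := Csum (fun k => T n k * Cnpow t k) n.

(** [t d/dt] applied to [GKP_row n]. *)
Definition GKP_row_theta (n : nat) (t : C) : C := Csum (fun k => CN k * T n k * Cnpow t k) n.

Lemma GKP_egf_term_row (t z : C) (n : nat) :
  GKP_egf_term a b g a' b' g' t z n = GKP_row n t * Cnpow z n / RtoC (INR (fact n)).
Proof. unfold GKP_egf_term, GKP_row. now rewrite sum_n_Csum. Qed.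

Lemma GKP_eq_0_gt (n k : nat) : (n < k)%nat -> T n k = 0.
Proof.
  revert k; induction n as [|n IH]; intros [|k] Hk; try lia; [reflexivity|].
  simpl. rewrite !IH by lia. ring.
Qed.

Lemma Csum_affine_row (u v t : C) (n : nat) :
  Csum (fun k => (u + v * CN k) * T n k * Cnpow t k) n = u * GKP_row n t + v * GKP_row_theta n t.
Proof.
  unfold GKP_row, GKP_row_theta. rewrite <- !Csum_scal, <- Csum_plus.
  apply Csum_ext; intros; ring.
Qed.

Lemma GKP_row_S (n : nat) (t : C) :
  GKP_row (S n) t =
  (a * CN n + g + t * (a' * CN n + g')) * GKP_row n t + (b + b' * t) * GKP_row_theta n t.
Proof.
  set (A := fun k => (a * CN n + g + b * CN k) * T n k * Cnpow t k).
  set (B := fun k => (a' * CN n + g' + b' * CN k) * T n k * Cnpow t k).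
  assert (HA : Csum A (S n) = Csum A n).
  { simpl Csum. unfold A at 2. rewrite GKP_eq_0_gt by lia. ring. }
  transitivity (Csum A (S n) + t * Csum B n).
  - unfold GKP_row at 1. rewrite !Csum_Sn_l, <- Csum_scal, <- Cplus_assoc, <- Csum_plus.
    unfold A, B; simpl; f_equal; [ring|]. apply Csum_ext; intros; simpl; ring.
  - rewrite HA. unfold A, B. rewrite !Csum_affine_row. ring.
Qed.

Lemma Cmod_CN (k : nat) : Cmod (CN k) = INR k.
Proof. unfold CN. rewrite Cmod_R. apply Rabs_pos_eq, pos_INR. Qed.

Lemma Cmod_Cnpow (t : C) (k : nat) : Cmod (Cnpow t k) = (Cmod t ^ k)%R.
Proof. induction k as [|k IH]; simpl; [apply Cmod_1 | now rewrite Cmod_mult, IH]. Qed.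

Definition GKP_size : R := 1 + Cmod a + Cmod b + Cmod g + Cmod a' + Cmod b' + Cmod g'.

Lemma GKP_size_ge_1 : (1 <= GKP_size)%R.
Proof.
  unfold GKP_size. pose proof (Cmod_ge_0 a). pose proof (Cmod_ge_0 b). pose proof (Cmod_ge_0 g).
  pose proof (Cmod_ge_0 a'). pose proof (Cmod_ge_0 b'). pose proof (Cmod_ge_0 g'). lra.
Qed.

Lemma Cmod_affine_coef_le (x y z : C) (m j n : nat) (K : R) :
  (1 + Cmod x + Cmod y + Cmod z <= K)%R -> (m <= n)%nat -> (j <= S n)%nat ->
  (Cmod (x * CN m + y * CN j + z) <= K * INR (S n))%R.
Proof.
  intros HK Hm Hj. apply le_INR in Hm, Hj. rewrite S_INR in *.
  eapply Rle_trans; [apply Cmod_triangle|].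
  eapply Rle_trans; [apply Rplus_le_compat_r, Cmod_triangle|].
  rewrite !Cmod_mult, !Cmod_CN.
  pose proof (Cmod_ge_0 x). pose proof (Cmod_ge_0 y). pose proof (Cmod_ge_0 z).
  pose proof (pos_INR n). pose proof (pos_INR m). pose proof (pos_INR j).
  assert (Cmod x * INR m <= Cmod x * (INR n + 1))%R by nra.
  assert (Cmod y * INR j <= Cmod y * (INR n + 1))%R by nra.
  nra.
Qed.

Lemma Cmod_GKP_le (n k : nat) : (Cmod (T n k) <= (2 * GKP_size) ^ n * INR (fact n))%R.
Proof.
  set (K := GKP_size). pose proof GKP_size_ge_1 as HK1. fold K in HK1.
  assert (HKa : (1 + Cmod a + Cmod b + Cmod g <= K)%R).
  { unfold K, GKP_size. pose proof (Cmod_ge_0 a'). pose proof (Cmod_ge_0 b').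
    pose proof (Cmod_ge_0 g'). lra. }
  assert (HKb : (1 + Cmod a' + Cmod b' + Cmod g' <= K)%R).
  { unfold K, GKP_size. pose proof (Cmod_ge_0 a). pose proof (Cmod_ge_0 b).
    pose proof (Cmod_ge_0 g). lra. }
  revert k; induction n as [|n IH]; intros k.
  - destruct k; simpl; [rewrite Cmod_1 | rewrite Cmod_0]; lra.
  - set (B := ((2 * K) ^ n * INR (fact n))%R) in *.
    assert (HB : (0 <= B)%R) by (apply Rmult_le_pos; [apply pow_le; lra | apply pos_INR]).
    assert (HS : (0 <= K * INR (S n))%R) by (pose proof (pos_INR (S n)); nra).
    replace ((2 * K) ^ S n * INR (fact (S n)))%R with (2 * (K * INR (S n)) * B)%R
      by (unfold B; rewrite fact_simpl, mult_INR; simpl; ring).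
    destruct k as [|j]; simpl GKP.
    + rewrite Cmod_mult.
      pose proof (Cmod_affine_coef_le a b g n 0 n K HKa (le_n _) (Nat.le_0_l _)).
      pose proof (IH 0%nat). pose proof (Cmod_ge_0 (T n 0)).
      pose proof (Cmod_ge_0 (a * CN n + b * CN 0 + g)). nra.
    + eapply Rle_trans; [apply Cmod_triangle|]. rewrite !Cmod_mult.
      destruct (Nat.lt_ge_cases n j) as [Hj|Hj].
      { rewrite !GKP_eq_0_gt by lia. rewrite !Cmod_0. nra. }
      pose proof (Cmod_affine_coef_le a b g n (S j) n K HKa (le_n _) ltac:(lia)).
      pose proof (Cmod_affine_coef_le a' b' g' n j n K HKb (le_n _) ltac:(lia)).
      pose proof (IH (S j)). pose proof (IH j).
      pose proof (Cmod_ge_0 (T n (S j))). pose proof (Cmod_ge_0 (T n j)).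
      pose proof (Cmod_ge_0 (a * CN n + b * CN (S j) + g)).
      pose proof (Cmod_ge_0 (a' * CN n + b' * CN j + g')). nra.
Qed.

Lemma Cmod_GKP_row_le (n : nat) (t : C) : (Cmod t <= 1)%R ->
  (Cmod (GKP_row n t) <= INR (S n) * ((2 * GKP_size) ^ n * INR (fact n)))%R.
Proof.
  intros Ht. apply Cmod_Csum_le. intros k _.
  rewrite Cmod_mult, Cmod_Cnpow. pose proof (Cmod_GKP_le n k).
  pose proof (pow_le (Cmod t) k (Cmod_ge_0 t)).
  assert (Cmod t ^ k <= 1)%R
    by (rewrite <- (pow1 k); apply pow_incr; split; [apply Cmod_ge_0 | exact Ht]).
  pose proof (Cmod_ge_0 (T n k)). nra.
Qed.

End GKPRows.

Lemma quad_le_pow2 (N : nat) : (INR (S N) * INR (S (S N)) <= 6 * 2 ^ N)%R.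
Proof.
  assert (H : (S N * S (S N) <= 6 * 2 ^ N)%nat).
  { induction N as [|N IH]; [simpl; lia|].
    rewrite Nat.pow_succ_r'. destruct N; [simpl; lia | nia]. }
  apply le_INR in H. rewrite !mult_INR, pow_INR in H.
  replace (INR 6) with 6%R in H by (simpl; ring). replace (INR 2) with 2%R in H by (simpl; ring).
  exact H.
Qed.

(** The term left over when a partial sum of the EGF is differentiated along a
    characteristic. *)
Lemma Cmod_GKP_tail_le (a b g a' b' g' t z : C) (N : nat) :
  (Cmod t <= 1)%R -> (2 * GKP_size a b g a' b' g' * Cmod z <= / 4)%R ->
  (Cmod (GKP_row a b g a' b' g' (S N) t * Cnpow z N / RtoC (INR (fact N)))
     <= 6 * (2 * GKP_size a b g a' b' g') * (/ 2) ^ N)%R.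
Proof.
  intros Ht Hz. set (Q := (2 * GKP_size a b g a' b' g')%R) in *.
  pose proof (Cmod_GKP_row_le a b g a' b' g' (S N) t Ht) as HP. fold Q in HP.
  rewrite fact_simpl, mult_INR in HP. simpl pow in HP.
  assert (HQ : (0 <= Q)%R) by (unfold Q; pose proof (GKP_size_ge_1 a b g a' b' g'); lra).
  assert (Hf : (0 < INR (fact N))%R) by apply INR_fact_lt_0.
  assert (Hqz : ((Q * Cmod z) ^ N <= (/ 4) ^ N)%R)
    by (apply pow_incr; pose proof (Cmod_ge_0 z); split; nra).
  pose proof (quad_le_pow2 N) as Hquad.
  rewrite Cmod_div, Cmod_mult, Cmod_Cnpow, Cmod_R, Rabs_pos_eq
    by (apply pos_INR || apply RtoC_INR_fact_neq0).
  apply Rle_div_l; [exact Hf|].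
  apply Rle_trans with (INR (S (S N)) * (Q * Q ^ N * (INR (S N) * INR (fact N))) * Cmod z ^ N)%R.
  { apply Rmult_le_compat_r; [apply pow_le, Cmod_ge_0 | exact HP]. }
  replace ((/ 2) ^ N)%R with (2 ^ N * (/ 4) ^ N)%R by (rewrite <- Rpow_mult_distr; f_equal; field).
  replace (INR (S (S N)) * (Q * Q ^ N * (INR (S N) * INR (fact N))) * Cmod z ^ N)%R
    with (Q * INR (fact N) * (INR (S N) * INR (S (S N))) * (Q * Cmod z) ^ N)%R
    by (rewrite Rpow_mult_distr; ring).
  replace (6 * Q * (2 ^ N * (/ 4) ^ N) * INR (fact N))%R
    with (Q * INR (fact N) * (6 * 2 ^ N) * (/ 4) ^ N)%R by ring.
  assert (0 <= Q * INR (fact N))%R by nra.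
  apply Rmult_le_compat.
  - apply Rmult_le_pos; [lra | apply Rmult_le_pos; apply pos_INR].
  - apply pow_le. pose proof (Cmod_ge_0 z). nra.
  - apply Rmult_le_compat_l; lra.
  - exact Hqz.
Qed.

(** * Summing the EGF along a characteristic *)

Lemma is_series_of_Csum (u : nat -> C) (l : C) :
  (forall eps : R, (0 < eps)%R ->
     exists N0, forall N, (N0 <= N)%nat -> (Cmod (Csum u N - l) < eps)%R) ->
  is_series u l.
Proof.
  intros H P [eps HP]. destruct (H eps (cond_pos eps)) as [N0 HN].
  exists N0. intros N HN0. apply HP, C_NormedModule_mixin_compat1.
  rewrite sum_n_Csum. apply HN. lia.
Qed.

Lemma geom_half_eventually_lt (c eps : R) :
  (0 < eps)%R -> exists N0, forall N, (N0 <= N)%nat -> (c * (/ 2) ^ N < eps)%R.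
Proof.
  intros He. destruct (Rle_lt_dec c 0) as [Hc|Hc].
  - exists 0%nat. intros N _. pose proof (pow_le (/ 2) N ltac:(lra)). nra.
  - destruct (pow_lt_1_zero (/ 2) ltac:(rewrite Rabs_pos_eq; lra) (eps / c)) as [N0 HN];
      [apply Rdiv_lt_0_compat; auto|].
    exists N0. intros N HN0. specialize (HN N HN0).
    rewrite Rabs_pos_eq in HN by (apply pow_le; lra).
    apply (Rmult_lt_compat_l c) in HN; [|exact Hc].
    replace (c * (eps / c))%R with eps in HN by (field; lra). exact HN.
Qed.

Lemma Csum_GKP_egf_at_0 (a b g a' b' g' t : C) (N : nat) :
  Csum (GKP_egf_term a b g a' b' g' t 0) N = 1.
Proof.
  assert (H0 : GKP_egf_term a b g a' b' g' t 0 0 = 1)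
    by (rewrite GKP_egf_term_row; unfold GKP_row; simpl; field).
  destruct N as [|N]; [exact H0|].
  rewrite Csum_Sn_l, H0, Csum_null; [ring|].
  intros k _. rewrite GKP_egf_term_row. simpl. unfold Cdiv. ring.
Qed.

Section Characteristic.

Variables a b g a' b' g' : C.
Variables tc zc mu : R -> C.

Hypothesis tc_ode : forall y, (0 <= y <= 1)%R ->
  is_derive_RC tc y (- mu y * tc y * (b + b' * tc y)).
Hypothesis zc_ode : forall y, (0 <= y <= 1)%R ->
  is_derive_RC zc y (mu y * (1 - (a + a' * tc y) * zc y)).

Local Notation row := (GKP_row a b g a' b' g').
Local Notation theta := (GKP_row_theta a b g a' b' g').
Local Notation egf_term := (GKP_egf_term a b g a' b' g').

Lemma GKP_row_along_derive (n : nat) (y : R) : (0 <= y <= 1)%R ->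
  is_derive_RC (fun y => row n (tc y)) y (- mu y * (b + b' * tc y) * theta n (tc y)).
Proof.
  intros Hy. unfold GKP_row, GKP_row_theta. eapply is_derive_RC_eq.
  - apply is_derive_RC_Csum. intros k _.
    apply is_derive_RC_scal, is_derive_RC_Cnpow, tc_ode, Hy.
  - rewrite <- Csum_scal. apply Csum_ext. intros [|k] _; unfold CN; simpl; ring.
Qed.

Lemma GKP_egf_term_along_derive (n : nat) (y : R) : (0 <= y <= 1)%R ->
  is_derive_RC (fun y => egf_term (tc y) (zc y) n) y
    (mu y * (- (b + b' * tc y) * theta n (tc y) * Cnpow (zc y) n
             + row n (tc y) * (CN n * Cnpow (zc y) (pred n)) * (1 - (a + a' * tc y) * zc y))
     / RtoC (INR (fact n))).
Proof.
  intros Hy. pose proof (RtoC_INR_fact_neq0 n).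
  eapply is_derive_RC_ext; [intros; symmetry; apply GKP_egf_term_row|].
  eapply is_derive_RC_eq.
  - apply is_derive_RC_div; [apply is_derive_RC_mult | apply is_derive_RC_const |].
    + apply GKP_row_along_derive, Hy.
    + apply is_derive_RC_Cnpow, zc_ode, Hy.
    + assumption.
  - cbv beta. field. assumption.
Qed.

Lemma Csum_GKP_egf_along_derive (N : nat) (y : R) : (0 <= y <= 1)%R ->
  is_derive_RC (fun y => Csum (egf_term (tc y) (zc y)) N) y
    (mu y * ((g + g' * tc y) * Csum (egf_term (tc y) (zc y)) N
             - row (S N) (tc y) * Cnpow (zc y) N / RtoC (INR (fact N)))).
Proof.
  intros Hy. pose proof RtoC_INR_fact_neq0.
  induction N as [|N IH]; simpl Csum.
  - eapply is_derive_RC_eq; [apply GKP_egf_term_along_derive, Hy|].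
    rewrite GKP_egf_term_row, GKP_row_S. unfold GKP_row, GKP_row_theta, CN; simpl. field.
  - eapply is_derive_RC_eq;
      [apply is_derive_RC_plus; [exact IH | apply GKP_egf_term_along_derive, Hy]|].
    rewrite (GKP_egf_term_row a b g a' b' g' _ _ (S N)), (GKP_row_S a b g a' b' g' (S N)),
      fact_simpl, mult_INR, RtoC_mult.
    simpl pred. simpl Cnpow.
    assert (HN : CN (S N) <> 0) by (intros E; apply RtoC_inj in E; apply (not_0_INR (S N)); auto).
    change (RtoC (INR (S N))) with (CN (S N)). field. auto.
Qed.

Variables (E : R -> C) (M : R).

Hypothesis E_ode : forall y, (0 <= y <= 1)%R ->
  is_derive_RC E y (- mu y * (g + g' * tc y) * E y).
Hypothesis tc_le : forall y, (0 <= y <= 1)%R -> (Cmod (tc y) <= 1)%R.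
Hypothesis zc_le : forall y, (0 <= y <= 1)%R ->
  (2 * GKP_size a b g a' b' g' * Cmod (zc y) <= / 4)%R.
Hypothesis mu_E_le : forall y, (0 <= y <= 1)%R -> (Cmod (mu y * E y) <= M)%R.
Hypotheses (zc_0 : zc 0%R = 0) (E_0 : E 0%R = 1) (E_1 : E 1%R <> 0).

Theorem GKP_egf_along_characteristic : is_series (egf_term (tc 1%R) (zc 1%R)) (/ E 1%R).
Proof.
  set (Q := (2 * GKP_size a b g a' b' g')%R).
  set (H := fun N y => Csum (egf_term (tc y) (zc y)) N).
  assert (HM : (0 <= M)%R) by (eapply Rle_trans; [apply Cmod_ge_0 | apply (mu_E_le 0%R); lra]).
  assert (HE1 : (0 < Cmod (E 1%R))%R) by (apply Cmod_gt_0, E_1).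
  apply is_series_of_Csum. intros eps Heps.
  destruct (geom_half_eventually_lt (2 * M * (6 * Q) / Cmod (E 1%R)) eps Heps) as [N0 HN0].
  exists N0. intros N HN.
  (* [H N * E] has derivative [- mu E] times the tail term, and equals [1] at [y = 0]. *)
  assert (Hmvt : (Cmod (H N 1%R * E 1%R - 1) <= 2 * (M * (6 * Q * (/ 2) ^ N)))%R).
  { pose proof (MVT_Cmod_le (fun y => H N y * E y)
      (fun y => - (mu y * E y) * (row (S N) (tc y) * Cnpow (zc y) N / RtoC (INR (fact N))))
      (M * (6 * Q * (/ 2) ^ N))) as MV.
    assert (H0 : H N 0%R = 1) by (unfold H; rewrite zc_0; apply Csum_GKP_egf_at_0).
    cbv beta in MV. rewrite H0, E_0, Cmult_1_l in MV.
    apply MV.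
    - intros y Hy. eapply is_derive_RC_eq.
      + apply is_derive_RC_mult; [apply Csum_GKP_egf_along_derive | apply E_ode]; exact Hy.
      + unfold H. ring.
    - intros y Hy. rewrite Cmod_mult, Cmod_opp.
      apply Rmult_le_compat; try apply Cmod_ge_0; [apply mu_E_le, Hy|].
      apply Cmod_GKP_tail_le; [apply tc_le | apply zc_le]; exact Hy. }
  replace (Csum (egf_term (tc 1%R) (zc 1%R)) N - / E 1%R)
    with ((H N 1%R * E 1%R - 1) / E 1%R) by (unfold H; field; exact E_1).
  rewrite Cmod_div by exact E_1.
  apply Rle_lt_trans with (2 * (M * (6 * Q * (/ 2) ^ N)) / Cmod (E 1%R))%R.
  - apply Rmult_le_compat_r; [left; apply Rinv_0_lt_compat, HE1 | exact Hmvt].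
  - replace (2 * (M * (6 * Q * (/ 2) ^ N)) / Cmod (E 1%R))%R
      with (2 * M * (6 * Q) / Cmod (E 1%R) * (/ 2) ^ N)%R by (field; lra).
    apply HN0, HN.
Qed.

End Characteristic.

(** * An explicit characteristic through [(t, z)] *)

Lemma Cmod_neq0 (u : C) : (0 < Cmod u)%R -> u <> 0.
Proof. intros H E. rewrite E, Cmod_0 in H. lra. Qed.

Lemma Cmod_sub_ge (u v : C) : (Cmod u - Cmod v <= Cmod (u + v))%R.
Proof.
  pose proof (Cmod_triangle (u + v) (- v)) as H. replace (u + v + - v) with u in H by ring.
  rewrite Cmod_opp in H. lra.
Qed.

Lemma segment_near_1 (X0 : C) (dl y : R) : (Cmod (X0 - 1) <= dl)%R -> (0 <= y <= 1)%R ->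
  (Cmod (1 + RtoC y * (X0 - 1) - 1) <= dl)%R.
Proof.
  intros H Hy. replace (1 + RtoC y * (X0 - 1) - 1) with (RtoC y * (X0 - 1)) by ring.
  rewrite Cmod_mult, Cmod_R, Rabs_pos_eq by lra. pose proof (Cmod_ge_0 (X0 - 1)). nra.
Qed.

(** The characteristic is parametrised by [x = xc y] running along the segment [[1, X0]],
    with [t = (t/X0) x] and [z = Wf x / (b + b' t)], where [x Wf'(x) = a Wf(x) / b - 1].
    Then [Ec = Ac^(g/b) Bc^(-g'/b')], and [Ac 1], [Bc 1] are the bases of the closed form. *)
Section CharacteristicPath.

Variables a b g a' b' g' : C.
Hypotheses (Hb : b <> 0) (Hb' : b' <> 0) (Hrel : a / b = a' / b' + 1).
Variables (Wf : C -> C) (t z X0 : C) (tau dl : R).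
Hypotheses (Ht : (Cmod t <= tau)%R) (HX : (Cmod (X0 - 1) <= dl)%R) (Hdl : (0 <= dl <= 1/8)%R)
  (Htau : (2 * tau <= 1)%R) (Hbt : (6 * Cmod b' * tau <= Cmod b)%R)
  (Hbz : (144 * (2 * GKP_size a b g a' b' g') * dl <= Cmod b)%R).

Let xc (y : R) : C := 1 + RtoC y * (X0 - 1).

Hypotheses
  (HW_le : forall x, (Cmod (x - 1) <= dl -> Cmod (Wf x) <= 24 * Cmod (x - 1))%R)
  (HW_ode : forall y, (0 <= y <= 1)%R ->
     is_derive_RC (fun y => Wf (xc y)) y (- ((X0 - 1) / xc y) * (1 - a * Wf (xc y) / b)))
  (HW_1 : Wf 1 = 0) (HW_X0 : Wf X0 = z * (b + b' * t)).

Let tc (y : R) : C := t / X0 * xc y.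
Let sc (y : R) : C := b + b' * tc y.
Let zc (y : R) : C := Wf (xc y) / sc y.
Let mu (y : R) : C := - ((X0 - 1) / (xc y * sc y)).
Let ka : C := b + b' * (t / X0).
Let Ac (y : R) : C := xc y * ka / sc y.
Let Bc (y : R) : C := ka / sc y.
Let Ec (y : R) : C := Cexpo (g / b * Clog_rhp (Ac y) - g' / b' * Clog_rhp (Bc y)).

Lemma Cmod_b_pos : (0 < Cmod b)%R.
Proof. apply Cmod_gt_0, Hb. Qed.

Lemma tau_ge_0 : (0 <= tau)%R.
Proof. pose proof (Cmod_ge_0 t); lra. Qed.

Lemma X0_neq0 : X0 <> 0.
Proof. apply Cmod_neq0. pose proof (near_1_Cmod_ge X0 dl HX). lra. Qed.

Lemma xc_near (y : R) : (0 <= y <= 1)%R -> (Cmod (xc y - 1) <= dl)%R.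
Proof. apply segment_near_1, HX. Qed.

Lemma Cmod_xc (y : R) : (0 <= y <= 1)%R -> (7/8 <= Cmod (xc y) <= 9/8)%R.
Proof.
  intros Hy. pose proof (near_1_Cmod_ge _ _ (xc_near y Hy)).
  pose proof (near_1_Cmod_le _ _ (xc_near y Hy)). lra.
Qed.

Lemma xc_neq0 (y : R) : (0 <= y <= 1)%R -> xc y <> 0.
Proof. intros Hy. apply Cmod_neq0. pose proof (Cmod_xc y Hy). lra. Qed.

Lemma Cmod_tc_le (y : R) : (0 <= y <= 1)%R -> (Cmod (tc y) <= 9/7 * tau)%R.
Proof.
  intros Hy. unfold tc. rewrite Cmod_mult, Cmod_div by apply X0_neq0.
  pose proof (near_1_Cmod_ge X0 dl HX). pose proof (Cmod_xc y Hy). pose proof tau_ge_0.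
  assert (Cmod t / Cmod X0 <= 8/7 * tau)%R by (apply Rle_div_l; nra).
  assert (0 <= Cmod t / Cmod X0)%R by (apply Rdiv_le_0_compat; [apply Cmod_ge_0 | lra]).
  apply Rle_trans with (8/7 * tau * (9/8))%R; [apply Rmult_le_compat; lra | lra].
Qed.

Lemma Cmod_b'_tc_le (y : R) : (0 <= y <= 1)%R -> (Cmod (b' * tc y) <= Cmod b / 3)%R.
Proof.
  intros Hy. rewrite Cmod_mult. pose proof (Cmod_tc_le y Hy). pose proof (Cmod_ge_0 b').
  pose proof Cmod_b_pos. nra.
Qed.

Lemma Cmod_sc_ge (y : R) : (0 <= y <= 1)%R -> (2/3 * Cmod b <= Cmod (sc y))%R.
Proof.
  intros Hy. pose proof (Cmod_sub_ge b (b' * tc y)). pose proof (Cmod_b'_tc_le y Hy).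
  pose proof Cmod_b_pos. unfold sc. lra.
Qed.

Lemma sc_neq0 (y : R) : (0 <= y <= 1)%R -> sc y <> 0.
Proof. intros Hy. apply Cmod_neq0. pose proof (Cmod_sc_ge y Hy). pose proof Cmod_b_pos. lra. Qed.

Lemma ka_eq_sc_0 : ka = sc 0%R.
Proof. unfold ka, sc, tc, xc. f_equal; f_equal; ring. Qed.

Lemma Ac_near (y : R) : (0 <= y <= 1)%R -> (Cmod (Ac y - 1) <= 3/2 * dl)%R.
Proof.
  intros Hy. unfold Ac.
  pose proof (sc_neq0 y Hy). pose proof (Cmod_sc_ge y Hy). pose proof Cmod_b_pos.
  assert (E : xc y * ka - sc y = b * (xc y - 1))
    by (unfold ka, sc, tc; field; apply X0_neq0).
  replace (xc y * ka / sc y - 1) with ((xc y * ka - sc y) / sc y) by (field; auto).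
  rewrite E.
  rewrite Cmod_div, Cmod_mult by auto. apply Rle_div_l; [lra|].
  pose proof (xc_near y Hy). pose proof (Cmod_ge_0 (xc y - 1)). nra.
Qed.

Lemma Bc_near (y : R) : (0 <= y <= 1)%R -> (Cmod (Bc y - 1) <= 1/2 * dl)%R.
Proof.
  intros Hy. unfold Bc.
  pose proof (sc_neq0 y Hy). pose proof (Cmod_sc_ge y Hy). pose proof Cmod_b_pos.
  assert (E : ka - sc y = - (b' * tc 0%R * (xc y - 1)))
    by (unfold ka, sc, tc, xc; ring).
  replace (ka / sc y - 1) with ((ka - sc y) / sc y) by (field; auto).
  rewrite E.
  rewrite Cmod_div, Cmod_opp, Cmod_mult by auto. apply Rle_div_l; [lra|].
  pose proof (Cmod_b'_tc_le 0%R ltac:(lra)). pose proof (xc_near y Hy).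
  pose proof (Cmod_ge_0 (xc y - 1)). pose proof (Cmod_ge_0 (b' * tc 0%R)).
  apply Rle_trans with (Cmod b / 3 * dl)%R; [apply Rmult_le_compat; lra | nra].
Qed.

Lemma sc_X0_neq0 (y : R) : (0 <= y <= 1)%R -> b * X0 + b' * (t * xc y) <> 0.
Proof.
  intros Hy. replace (b * X0 + b' * (t * xc y)) with (sc y * X0)
    by (unfold sc, tc; field; apply X0_neq0).
  apply Cmult_neq_0; [apply sc_neq0, Hy | apply X0_neq0].
Qed.

Lemma xc_derive (y : R) : is_derive_RC xc y (X0 - 1).
Proof. apply is_derive_RC_affine. Qed.

Lemma sc_derive (y : R) : is_derive_RC sc y (b' * (t / X0) * (X0 - 1)).
Proof.
  eapply is_derive_RC_ext; [|apply (is_derive_RC_affine y ka)].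
  intros u. unfold sc, tc, xc, ka. ring.
Qed.

Lemma tc_ode (y : R) : (0 <= y <= 1)%R -> is_derive_RC tc y (- mu y * tc y * (b + b' * tc y)).
Proof.
  intros Hy. pose proof (xc_neq0 y Hy). pose proof (sc_neq0 y Hy).
  eapply is_derive_RC_eq; [apply is_derive_RC_scal, xc_derive|].
  unfold mu. fold (sc y). unfold tc. field. repeat split; auto. apply X0_neq0.
Qed.

Lemma zc_ode (y : R) : (0 <= y <= 1)%R ->
  is_derive_RC zc y (mu y * (1 - (a + a' * tc y) * zc y)).
Proof.
  intros Hy. pose proof (xc_neq0 y Hy). pose proof (sc_neq0 y Hy).
  assert (Ha' : a' = (a / b - 1) * b') by (rewrite Hrel; field; auto).
  eapply is_derive_RC_eq; [apply is_derive_RC_div; [apply HW_ode, Hy | apply sc_derive | auto]|].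
  pose proof (sc_X0_neq0 y Hy).
  unfold zc, mu, sc, tc. rewrite Ha'. field. repeat split; auto. apply X0_neq0.
Qed.

Lemma Ec_ode (y : R) : (0 <= y <= 1)%R ->
  is_derive_RC Ec y (- mu y * (g + g' * tc y) * Ec y).
Proof.
  intros Hy. pose proof (xc_neq0 y Hy). pose proof (sc_neq0 y Hy). pose proof (sc_X0_neq0 y Hy).
  pose proof (near_1_re_ge _ _ (Ac_near y Hy)). pose proof (near_1_re_ge _ _ (Bc_near y Hy)).
  unfold Ec, Ac, Bc in *.
  assert (Hka : ka <> 0) by (rewrite ka_eq_sc_0; apply sc_neq0; lra).
  assert (b * X0 + b' * t <> 0).
  { replace (b * X0 + b' * t) with (ka * X0) by (unfold ka; field; apply X0_neq0).
    apply Cmult_neq_0; [exact Hka | apply X0_neq0]. }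
  eapply is_derive_RC_eq.
  - apply is_derive_RC_Cexpo, is_derive_RC_minus; apply is_derive_RC_scal, is_derive_RC_Clog_rhp;
      try lra; (apply is_derive_RC_div; [| apply sc_derive | auto]).
    + apply is_derive_RC_mult; [apply xc_derive | apply is_derive_RC_const].
    + apply is_derive_RC_const.
  - unfold mu. fold (sc y). generalize (Cexpo (g / b * Clog_rhp (xc y * ka / sc y)
      - g' / b' * Clog_rhp (ka / sc y))). intros e.
    unfold sc, tc, ka. field. repeat split; auto; apply X0_neq0.
Qed.

Lemma zc_le (y : R) : (0 <= y <= 1)%R -> (2 * GKP_size a b g a' b' g' * Cmod (zc y) <= / 4)%R.
Proof.
  intros Hy. set (Q := (2 * GKP_size a b g a' b' g')%R) in *.
  assert (HQ : (0 <= Q)%R) by (unfold Q; pose proof (GKP_size_ge_1 a b g a' b' g'); lra).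
  pose proof (Cmod_sc_ge y Hy). pose proof Cmod_b_pos.
  assert (HW : (Cmod (Wf (xc y)) <= 24 * dl)%R).
  { pose proof (xc_near y Hy). pose proof (HW_le _ (xc_near y Hy)). lra. }
  assert (Hz : (Cmod (zc y) <= 36 * dl / Cmod b)%R).
  { unfold zc. rewrite Cmod_div by (apply sc_neq0, Hy).
    apply Rle_div_l; [lra|]. apply Rle_trans with (24 * dl)%R; [exact HW|].
    apply (Rmult_le_reg_r (Cmod b)); [lra|]. field_simplify; nra. }
  apply Rle_trans with (Q * (36 * dl / Cmod b))%R; [apply Rmult_le_compat_l; auto|].
  apply (Rmult_le_reg_r (Cmod b)); [lra|]. field_simplify; lra.
Qed.

Lemma Cmod_mu_Ec_le (y : R) : (0 <= y <= 1)%R ->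
  (Cmod (mu y * Ec y) <= exp (Cmod (g / b) + Cmod (g' / b')) / Cmod b)%R.
Proof.
  intros Hy. pose proof (Cmod_sc_ge y Hy). pose proof (Cmod_xc y Hy). pose proof Cmod_b_pos.
  assert (Hmu : (Cmod (mu y) <= 1 / Cmod b)%R).
  { unfold mu. rewrite Cmod_opp, Cmod_div, Cmod_mult
      by (apply Cmult_neq_0; [apply xc_neq0 | apply sc_neq0]; exact Hy).
    apply Rle_div_l; [nra|]. unfold Rdiv. rewrite Rmult_1_l.
    apply (Rmult_le_reg_l (Cmod b)); [lra|]. field_simplify; [|lra]. nra. }
  assert (HA : (Cmod (Clog_rhp (Ac y)) <= 1)%R)
    by (pose proof (Cmod_Clog_rhp_le _ _ (Ac_near y Hy) ltac:(lra)); lra).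
  assert (HB : (Cmod (Clog_rhp (Bc y)) <= 1)%R)
    by (pose proof (Cmod_Clog_rhp_le _ _ (Bc_near y Hy) ltac:(lra)); lra).
  assert (HE : (Cmod (Ec y) <= exp (Cmod (g / b) + Cmod (g' / b')))%R).
  { eapply Rle_trans; [apply Cmod_Cexpo_le | apply exp_le_exp].
    unfold Cminus. eapply Rle_trans; [apply Cmod_triangle|]. rewrite Cmod_opp, !Cmod_mult.
    pose proof (Cmod_ge_0 (g / b)). pose proof (Cmod_ge_0 (g' / b')).
    pose proof (Cmod_ge_0 (Clog_rhp (Ac y))). pose proof (Cmod_ge_0 (Clog_rhp (Bc y))).
    nra. }
  rewrite Cmod_mult. unfold Rdiv. rewrite Rmult_comm.
  apply Rmult_le_compat; try apply Cmod_ge_0; [exact HE | lra].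
Qed.

Lemma tc_1 : tc 1%R = t.
Proof. unfold tc, xc. field. apply X0_neq0. Qed.

Lemma zc_1 : zc 1%R = z.
Proof.
  assert (Hs : sc 1%R = b + b' * t) by (unfold sc; now rewrite tc_1).
  unfold zc. replace (xc 1%R) with X0 by (unfold xc; ring).
  rewrite Hs, HW_X0. field. rewrite <- Hs. apply sc_neq0. lra.
Qed.

Lemma zc_0 : zc 0%R = 0.
Proof.
  unfold zc. replace (xc 0%R) with (RtoC 1) by (unfold xc; ring).
  rewrite HW_1. unfold Cdiv. ring.
Qed.

Lemma Ec_0 : Ec 0%R = 1.
Proof.
  assert (Hka : ka <> 0) by (rewrite ka_eq_sc_0; apply sc_neq0; lra).
  unfold Ec, Ac, Bc. rewrite <- ka_eq_sc_0. replace (xc 0%R) with (RtoC 1) by (unfold xc; ring).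
  replace (1 * ka / ka) with (RtoC 1) by (field; auto).
  replace (ka / ka) with (RtoC 1) by (field; auto).
  rewrite Clog_rhp_1. replace (g / b * 0 - g' / b' * 0) with (RtoC 0) by ring. apply Cexpo_0.
Qed.

Lemma inv_Ec_1 : / Ec 1%R =
  Cexpo (- (g / b) * Clog_rhp (X0 * ka / (b + b' * t))) *
  Cexpo (g' / b' * Clog_rhp (ka / (b + b' * t))).
Proof.
  assert (Hs : sc 1%R = b + b' * t) by (unfold sc; now rewrite tc_1).
  unfold Ec, Ac, Bc. rewrite <- Cexpo_opp, <- Cexpo_add, Hs.
  replace (xc 1%R) with X0 by (unfold xc; ring).
  f_equal. ring.
Qed.

Theorem GKP_egf_along_path :
  is_series (GKP_egf_term a b g a' b' g' t z)
    (Cexpo (- (g / b) * Clog_rhp (X0 * ka / (b + b' * t))) *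
     Cexpo (g' / b' * Clog_rhp (ka / (b + b' * t)))).
Proof.
  rewrite <- inv_Ec_1, <- tc_1, <- zc_1 at 1.
  apply GKP_egf_along_characteristic with (mu := mu)
    (M := (exp (Cmod (g / b) + Cmod (g' / b')) / Cmod b)%R).
  - exact tc_ode.
  - exact zc_ode.
  - exact Ec_ode.
  - intros y Hy. pose proof (Cmod_tc_le y Hy). lra.
  - exact zc_le.
  - exact Cmod_mu_Ec_le.
  - exact zc_0.
  - exact Ec_0.
  - apply Cexpo_neq0.
Qed.

Theorem GKP_egf_along_path_Cprinpow :
  is_series (GKP_egf_term a b g a' b' g' t z)
    (Cprinpow (1 - b / (b + b' * t) * (1 - X0)) (- g / b) *
     Cprinpow (1 - b' * t / (b + b' * t) * (1 - / X0)) (g' / b')).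
Proof.
  assert (Hs : sc 1%R = b + b' * t) by (unfold sc; now rewrite tc_1).
  assert (Hs0 : b + b' * t <> 0) by (rewrite <- Hs; apply sc_neq0; lra).
  assert (Hx : xc 1%R = X0) by (unfold xc; ring).
  pose proof X0_neq0.
  replace (1 - b / (b + b' * t) * (1 - X0)) with (X0 * ka / (b + b' * t))
    by (unfold ka; field; auto).
  replace (1 - b' * t / (b + b' * t) * (1 - / X0)) with (ka / (b + b' * t))
    by (unfold ka; field; auto).
  pose proof (near_1_re_ge _ _ (Ac_near 1%R ltac:(lra))) as HA.
  pose proof (near_1_re_ge _ _ (Bc_near 1%R ltac:(lra))) as HB.
  unfold Ac, Bc in HA, HB.
  rewrite Hx, Hs in HA. rewrite Hs in HB.
  rewrite !Cprinpow_rhp by lra.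
  replace (- g / b) with (- (g / b)) by (field; exact Hb).
  exact GKP_egf_along_path.
Qed.

End CharacteristicPath.

(** * The two closed forms *)

Section ClosedForms.

Variables a b g a' b' g' : C.
Hypotheses (Hb : b <> 0) (Hb' : b' <> 0) (Hrel : a / b = a' / b' + 1).
Variable eps : R.
Hypotheses (Heps : (0 < eps)%R) (Heps_half : (2 * eps <= 1)%R)
  (Heps_b' : (6 * Cmod b' * eps <= Cmod b)%R) (Heps_b : (384 * Cmod b * eps <= 1)%R)
  (Heps_size : (144 * (2 * GKP_size a b g a' b' g') * (48 * Cmod b * eps) <= Cmod b)%R)
  (Heps_a : (192 * Cmod a * eps <= 1)%R).
Variables t z : C.
Hypotheses (Ht : (Cmod t < eps)%R) (Hz : (Cmod z < eps)%R).

Lemma Cmod_b_b't_le : (Cmod (b + b' * t) <= 7/6 * Cmod b)%R.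
Proof.
  eapply Rle_trans; [apply Cmod_triangle|]. rewrite Cmod_mult.
  pose proof (Cmod_ge_0 b'). pose proof (Cmod_ge_0 t). nra.
Qed.

Lemma b_b't_neq0 : b + b' * t <> 0.
Proof.
  apply Cmod_neq0. pose proof (Cmod_sub_ge b (b' * t)). rewrite Cmod_mult in *.
  pose proof (Cmod_ge_0 b'). pose proof (Cmod_ge_0 t). pose proof (Cmod_gt_0 b) as [Hbp _].
  specialize (Hbp Hb). nra.
Qed.

Let dl : R := 48 * Cmod b * eps.

Lemma dl_range : (0 <= dl <= 1/8)%R.
Proof. unfold dl. pose proof (Cmod_ge_0 b). split; nra. Qed.

Lemma Clog_rhp_segment_derive (X0 : C) (y : R) :
  (Cmod (X0 - 1) <= dl)%R -> (0 <= y <= 1)%R ->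
  is_derive_RC (fun y => Clog_rhp (1 + RtoC y * (X0 - 1))) y ((X0 - 1) / (1 + RtoC y * (X0 - 1))).
Proof.
  intros HX Hy. apply is_derive_RC_Clog_rhp; [apply is_derive_RC_affine|].
  pose proof (near_1_re_ge _ _ (segment_near_1 X0 dl y HX Hy)). unfold dl in *. lra.
Qed.

Lemma segment_neq0 (X0 : C) (y : R) :
  (Cmod (X0 - 1) <= dl)%R -> (0 <= y <= 1)%R -> 1 + RtoC y * (X0 - 1) <> 0.
Proof.
  intros HX Hy E. pose proof (near_1_Cmod_ge _ _ (segment_near_1 X0 dl y HX Hy)).
  rewrite E, Cmod_0 in *. unfold dl in *. lra.
Qed.

Lemma Cmod_Cexpo_sub_1_le_dl (v : C) : (Cmod v <= 14/3 * Cmod b * eps)%R ->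
  (Cmod (Cexpo v - 1) <= dl)%R.
Proof.
  intros Hv. pose proof (Cmod_ge_0 b).
  eapply Rle_trans; [apply Cmod_Cexpo_sub_1_le; nra|]. unfold dl. nra.
Qed.

Lemma Cmod_power_W_le (x : C) : a <> 0 -> (Cmod (x - 1) <= dl)%R ->
  (Cmod (b / a * (1 - Cexpo (a / b * Clog_rhp x))) <= 24 * Cmod (x - 1))%R.
Proof.
  intros Ha Hx. pose proof dl_range. unfold dl in *.
  pose proof (Cmod_gt_0 a) as [Hap _]. specialize (Hap Ha).
  pose proof (Cmod_gt_0 b) as [Hbp _]. specialize (Hbp Hb).
  pose proof (Cmod_Clog_rhp_le x _ (Rle_refl _) ltac:(lra)) as HCx.
  assert (Hw : (Cmod (a / b * Clog_rhp x) <= 1)%R).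
  { rewrite Cmod_mult, Cmod_div by exact Hb.
    apply Rle_trans with (Cmod a / Cmod b * (4 * (48 * Cmod b * eps)))%R.
    - apply Rmult_le_compat_l; [apply Rdiv_le_0_compat; lra | lra].
    - replace (Cmod a / Cmod b * (4 * (48 * Cmod b * eps)))%R with (192 * Cmod a * eps)%R
        by (field; lra). lra. }
  pose proof (Cmod_Cexpo_sub_1_le _ Hw) as HE.
  rewrite Cmod_mult, Cmod_div in HE by exact Hb.
  replace (1 - Cexpo (a / b * Clog_rhp x)) with (- (Cexpo (a / b * Clog_rhp x) - 1)) by ring.
  rewrite Cmod_mult, Cmod_opp, Cmod_div by exact Ha.
  apply Rle_trans with (Cmod b / Cmod a * (6 * (Cmod a / Cmod b * (4 * Cmod (x - 1)))))%R.
  - apply Rmult_le_compat_l; [apply Rdiv_le_0_compat; lra|].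
    eapply Rle_trans; [exact HE|]. apply Rmult_le_compat_l; [lra|].
    apply Rmult_le_compat_l; [apply Rdiv_le_0_compat; lra | exact HCx].
  - right. field. lra.
Qed.

Lemma power_W_segment_derive (X0 : C) (y : R) : a <> 0 ->
  (Cmod (X0 - 1) <= dl)%R -> (0 <= y <= 1)%R ->
  is_derive_RC (fun y => b / a * (1 - Cexpo (a / b * Clog_rhp (1 + RtoC y * (X0 - 1))))) y
    (- ((X0 - 1) / (1 + RtoC y * (X0 - 1))) *
     (1 - a * (b / a * (1 - Cexpo (a / b * Clog_rhp (1 + RtoC y * (X0 - 1))))) / b)).
Proof.
  intros Ha HX Hy. pose proof (segment_neq0 X0 y HX Hy).
  eapply is_derive_RC_eq.
  - apply is_derive_RC_scal, is_derive_RC_minus; [apply is_derive_RC_const|].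
    apply is_derive_RC_Cexpo, is_derive_RC_scal, Clog_rhp_segment_derive; auto.
  - cbv beta. field. auto.
Qed.

Lemma Cmod_power_base_sub_1_le :
  (Cmod (1 - a * z / (b / (b + b' * t)) - 1) <= 7/6 * Cmod a * eps)%R.
Proof.
  pose proof b_b't_neq0. pose proof Cmod_b_b't_le.
  pose proof (Cmod_gt_0 b) as [Hbp _]. specialize (Hbp Hb).
  replace (1 - a * z / (b / (b + b' * t)) - 1) with (- (a * z * (b + b' * t)) / b)
    by (field; auto).
  rewrite Cmod_div, Cmod_opp, !Cmod_mult by exact Hb. apply Rle_div_l; [lra|].
  pose proof (Cmod_ge_0 a). pose proof (Cmod_ge_0 z). pose proof (Cmod_ge_0 (b + b' * t)).
  apply Rle_trans with (Cmod a * eps * (7/6 * Cmod b))%R; [|lra].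
  apply Rmult_le_compat; try nra.
Qed.

Lemma GKP_egf_power_form : a <> 0 ->
  is_series (GKP_egf_term a b g a' b' g' t z)
    (Cprinpow (1 - b / (b + b' * t) * (1 - Cprinpow (1 - a * z / (b / (b + b' * t))) (b / a)))
       (- g / b) *
     Cprinpow (1 - b' * t / (b + b' * t) *
                 (1 - Cprinpow (1 - a * z / (b / (b + b' * t))) (- b / a))) (g' / b')).
Proof.
  intros Ha. pose proof b_b't_neq0 as Hs0.
  pose proof (Cmod_gt_0 a) as [Hap _]. specialize (Hap Ha).
  set (u0 := 1 - a * z / (b / (b + b' * t))).
  pose proof Cmod_power_base_sub_1_le as Hu0. fold u0 in Hu0.
  assert (Hu0p : (0 < fst u0)%R) by (pose proof (near_1_re_ge _ _ Hu0); lra).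
  set (v := b / a * Clog_rhp u0).
  assert (Hv : (Cmod v <= 14/3 * Cmod b * eps)%R).
  { unfold v. rewrite Cmod_mult, Cmod_div by exact Ha.
    pose proof (Cmod_Clog_rhp_le u0 _ Hu0 ltac:(lra)).
    replace (14/3 * Cmod b * eps)%R with (Cmod b / Cmod a * (4 * (7/6 * Cmod a * eps)))%R
      by (field; lra).
    apply Rmult_le_compat_l; [apply Rdiv_le_0_compat; [apply Cmod_ge_0 | lra] | lra]. }
  set (X0 := Cexpo v).
  rewrite (Cprinpow_rhp u0 (b / a)), (Cprinpow_rhp u0 (- b / a)) by exact Hu0p.
  replace (- b / a * Clog_rhp u0) with (- v) by (unfold v; field; exact Ha).
  rewrite Cexpo_opp. fold X0.
  pose proof (Cmod_Cexpo_sub_1_le_dl v Hv) as HX.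
  apply GKP_egf_along_path_Cprinpow
    with (Wf := fun x => b / a * (1 - Cexpo (a / b * Clog_rhp x))) (tau := eps) (dl := dl);
    auto using dl_range; try lra.
  - intros x Hx. exact (Cmod_power_W_le x Ha Hx).
  - intros y Hy. exact (power_W_segment_derive X0 y Ha HX Hy).
  - rewrite Clog_rhp_1, Cmult_0_r, Cexpo_0. ring.
  - unfold X0. rewrite Clog_rhp_Cexpo.
    + unfold v. replace (a / b * (b / a * Clog_rhp u0)) with (Clog_rhp u0) by (field; auto).
      rewrite Cexpo_Clog_rhp by exact Hu0p. unfold u0. field. repeat split; auto.
    + pose proof (im_le_Cmod v). pose proof PI2_1. lra.
Qed.

Lemma GKP_egf_exp_form : a = 0 ->
  is_series (GKP_egf_term a b g a' b' g' t z)
    (Cprinpow (1 - b / (b + b' * t) * (1 - Cexpo (- z * (b + b' * t)))) (- g / b) *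
     Cprinpow (1 - b' * t / (b + b' * t) * (1 - Cexpo (z * (b + b' * t)))) (g' / b')).
Proof.
  intros Ha0. pose proof Cmod_b_b't_le as Hs0b.
  set (s0 := b + b' * t) in *.
  set (X0 := Cexpo (- z * s0)).
  assert (Hzs : (Cmod (- z * s0) <= 14/3 * Cmod b * eps)%R).
  { rewrite Cmod_mult, Cmod_opp. pose proof (Cmod_ge_0 z). pose proof (Cmod_ge_0 s0).
    apply Rle_trans with (eps * (7/6 * Cmod b))%R; [apply Rmult_le_compat; lra | nra]. }
  pose proof (Cmod_Cexpo_sub_1_le_dl _ Hzs) as HX.
  replace (Cexpo (z * s0)) with (/ X0) by (unfold X0; rewrite <- Cexpo_opp; f_equal; ring).
  apply GKP_egf_along_path_Cprinpow
    with (Wf := fun x => - Clog_rhp x) (tau := eps) (dl := dl);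
    auto using dl_range; try lra.
  - intros x Hx. rewrite Cmod_opp. pose proof dl_range.
    pose proof (Cmod_Clog_rhp_le x _ (Rle_refl _) ltac:(lra)).
    pose proof (Cmod_ge_0 (x - 1)). lra.
  - intros y Hy. pose proof (segment_neq0 X0 y HX Hy).
    eapply is_derive_RC_eq.
    + eapply is_derive_RC_ext;
        [|apply (is_derive_RC_scal y (- (1))), (Clog_rhp_segment_derive X0); auto].
      intros u. cbv beta. ring.
    + rewrite Ha0. field. auto.
  - rewrite Clog_rhp_1. ring.
  - unfold X0. rewrite Clog_rhp_Cexpo; [unfold s0; ring|].
    pose proof (im_le_Cmod (- z * s0)). pose proof PI2_1. lra.
Qed.

End ClosedForms.

Lemma exists_GKP_radius (a b b' : C) (K : R) : b <> 0 -> (0 <= K)%R ->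
  exists eps : R, (0 < eps)%R /\ (2 * eps <= 1)%R /\ (6 * Cmod b' * eps <= Cmod b)%R /\
    (384 * Cmod b * eps <= 1)%R /\ (144 * (2 * K) * (48 * Cmod b * eps) <= Cmod b)%R /\
    (192 * Cmod a * eps <= 1)%R.
Proof.
  intros Hb HK. pose proof (Cmod_gt_0 b) as [Hbp _]. specialize (Hbp Hb).
  pose proof (Cmod_ge_0 a). pose proof (Cmod_ge_0 b').
  assert (Hb'b : (0 <= Cmod b' / Cmod b)%R) by (apply Rdiv_le_0_compat; lra).
  set (S := (1 + 2 * K + Cmod a + Cmod b + Cmod b' / Cmod b)%R).
  assert (HS : (0 < S)%R) by (unfold S; lra).
  exists (/ (7000 * S))%R.
  assert (Hu : forall u, (0 <= u <= S)%R -> (7000 * u * / (7000 * S) <= 1)%R).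
  { intros u Hu. replace (7000 * u * / (7000 * S))%R with (u / S)%R by (field; lra).
    apply Rle_div_l; lra. }
  assert (Heps : (0 < / (7000 * S))%R) by (apply Rinv_0_lt_compat; lra).
  set (eps := (/ (7000 * S))%R) in *.
  pose proof (Hu 1%R ltac:(unfold S; lra)).
  pose proof (Hu (Cmod b' / Cmod b)%R ltac:(unfold S; lra)) as Hb'.
  pose proof (Hu (Cmod b) ltac:(unfold S; lra)).
  pose proof (Hu (2 * K)%R ltac:(unfold S; lra)).
  pose proof (Hu (Cmod a) ltac:(unfold S; lra)).
  repeat split; try nra.
  replace (Cmod b' / Cmod b)%R with (Cmod b' * / Cmod b)%R in Hb' by reflexivity.
  apply (Rmult_le_reg_r (/ Cmod b)); [apply Rinv_0_lt_compat, Hbp|].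
  rewrite Rinv_r by lra. nra.
Qed.

Theorem mainTheorem7 (a b g a' b' g' : C) :
  b <> 0 -> b' <> 0 -> a / b = a' / b' + 1 ->
  (a <> 0 ->
   exists eps : R, (0 < eps)%R /\
   forall t z : C, (Cmod t < eps)%R -> (Cmod z < eps)%R ->
     let rho := b / (b + b' * t) in
     is_series (GKP_egf_term a b g a' b' g' t z)
       (Cprinpow (1 - rho * (1 - Cprinpow (1 - a * z / rho) (b / a))) (- g / b)
        * Cprinpow (1 - b' * t / (b + b' * t) * (1 - Cprinpow (1 - a * z / rho) (- b / a)))
               (g' / b'))) /\
  (a = 0 ->
   exists eps : R, (0 < eps)%R /\
   forall t z : C, (Cmod t < eps)%R -> (Cmod z < eps)%R ->
     let rho := b / (b + b' * t) in
     is_series (GKP_egf_term a b g a' b' g' t z)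
       (Cprinpow (1 - rho * (1 - Cexpo (- z * (b + b' * t)))) (- g / b)
        * Cprinpow (1 - b' * t / (b + b' * t) * (1 - Cexpo (z * (b + b' * t))))
               (g' / b'))).
Proof.
  intros Hb Hb' Hrel.
  assert (HK : (0 <= GKP_size a b g a' b' g')%R)
    by (pose proof (GKP_size_ge_1 a b g a' b' g'); lra).
  destruct (exists_GKP_radius a b b' _ Hb HK) as (eps & Heps & H1 & H2 & H3 & H4 & H5).
  split; intros Ha; exists eps; split; auto; intros t z Ht Hz; cbv zeta.
  - apply (GKP_egf_power_form a b g a' b' g' Hb Hb' Hrel eps); auto.
  - apply (GKP_egf_exp_form a b g a' b' g' Hb Hb' Hrel eps); auto.
Qed.
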